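(* If $n$ is a non-negative integer and $x$ is a complex number, then $$\sum_{k = 1}^n \sum_{j = 0}^{k - 1} \binom{n}{j} \frac{x^{n - j}}{k - j} = (1 + x)^n H_n - \sum_{k = 1}^n \frac{(1 + x)^{n - k}}{k}.$$ In particular, $$\sum_{k = 1}^n \sum_{j = 0}^{k - 1} \frac{\binom{n}{j}}{k - j} = 2^n \left(H_n - \sum_{k = 1}^n \frac{1}{2^k k} \right).$$
   Context: $H_n=\sum_{m=1}^n\frac1m$. Empty sums are zero. *)

From mathcomp Require Import all_boot all_order all_algebra.
From mathcomp Require Export complex.
From mathcomp Require Import reals.
Set Implicit Arguments. Unset Strict Implicit. Unset Printing Implicit Defensive.
Import Order.TTheory GRing.Theory Num.Theory.
Local Open Scope ring_scope.

Definition harmonic (F : fieldType) (n : nat) : F :=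
  \sum_(1 <= m < n.+1) (m%:R)^-1.

From mathcomp Require Import all_boot all_order all_algebra.
From mathcomp Require Import complex reals ring.
Import Order.TTheory GRing.Theory Num.Theory.
Local Open Scope ring_scope.

(* Summing over j first, with m = k - j inside, turns the double sum into
   sum_j C(n,j) x^(n-j) H_(n-j), that is, sum_m C(n,m) x^m H_m.  This sum and
   the right-hand side both satisfy f(0) = 0 and
     f(n+1) = (1 + x) f(n) + ((1 + x)^(n+1) - 1) / (n+1);
   for the sum this comes from Pascal's rule, H_(m+1) = H_m + 1/(m+1), and
   sum_m C(n,m) x^(m+1)/(m+1) = ((1 + x)^(n+1) - 1)/(n+1), the integral of
   (1 + t)^n over [0, x]. *)

Section BinomialHarmonic.
Variable F : fieldType.

Lemma harmonic0 : harmonic F 0 = 0.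
Proof. by rewrite /harmonic big_geq. Qed.

Lemma harmonicS n : harmonic F n.+1 = harmonic F n + n.+1%:R^-1.
Proof. by rewrite /harmonic big_nat_recr. Qed.

Lemma sum_div_sub_harmonic (g : nat -> F) N :
  \sum_(1 <= k < N.+1) \sum_(0 <= j < k) g j / (k - j)%:R
  = \sum_(0 <= j < N.+1) g j * harmonic F (N - j).
Proof.
elim: N => [|N IH]; first by rewrite big_geq // big_nat1 harmonic0 mulr0.
rewrite big_nat_recr //= IH [RHS]big_nat_recr //= subnn harmonic0 mulr0 addr0.
rewrite -big_split /= !big_nat; apply: eq_bigr => j /andP[_ ltjN].
by rewrite subSn // harmonicS mulrDr.
Qed.

Hypothesis F_char0 : has_pchar0 F.

Lemma natrS_neq0 n : n.+1%:R != 0 :> F.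
Proof. by move/pcharf0P: F_char0 => ->. Qed.

Lemma sum_bin_exprS_div n (x : F) :
  \sum_(m < n.+1) 'C(n, m)%:R * x ^+ m.+1 / m.+1%:R
  = ((1 + x) ^+ n.+1 - 1) / n.+1%:R.
Proof.
have binS_div m : 'C(n, m)%:R / m.+1%:R = 'C(n.+1, m.+1)%:R / n.+1%:R :> F.
  apply/eqP; rewrite eqr_div ?natrS_neq0 // -!natrM.
  by rewrite mulnC (mul_bin_diag n.+1) mulnC.
rewrite [1 + x]addrC exprD1n [\sum_(i < n.+2) _]big_ord_recl expr0 bin0.
rewrite addrC addKr mulr_suml.
by apply: eq_bigr => m _; rewrite mulrAC binS_div mulrAC mulr_natl.
Qed.

Definition bin_harmonic n (x : F) :=
  \sum_(m < n.+1) 'C(n, m)%:R * x ^+ m * harmonic F m.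

Lemma bin_harmonicS n x :
  bin_harmonic n.+1 x
  = (1 + x) * bin_harmonic n x + ((1 + x) ^+ n.+1 - 1) / n.+1%:R.
Proof.
have shift_up : bin_harmonic n.+1 x
    = \sum_(m < n.+1) 'C(n.+1, m.+1)%:R * x ^+ m.+1 * harmonic F m.+1.
  by rewrite /bin_harmonic big_ord_recl harmonic0 mulr0 add0r.
have shift_same : bin_harmonic n x
    = \sum_(m < n.+1) 'C(n, m.+1)%:R * x ^+ m.+1 * harmonic F m.+1.
  rewrite /bin_harmonic big_ord_recl harmonic0 mulr0 add0r [RHS]big_ord_recr /=.
  by rewrite bin_small // !mul0r addr0.
have shift_power : \sum_(m < n.+1) 'C(n, m)%:R * x ^+ m.+1 * harmonic F m.+1
    = x * bin_harmonic n x + \sum_(m < n.+1) 'C(n, m)%:R * x ^+ m.+1 / m.+1%:R.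
  rewrite /bin_harmonic mulr_sumr -big_split /=; apply: eq_bigr => m _.
  by rewrite harmonicS exprS; ring.
rewrite shift_up -sum_bin_exprS_div mulrDl mul1r -addrA -shift_power shift_same.
rewrite addrC -big_split /=; apply: eq_bigr => m _.
by rewrite binS natrD !mulrDl addrC.
Qed.

Lemma bin_harmonicE n x :
  bin_harmonic n x
  = (1 + x) ^+ n * harmonic F n
    - \sum_(1 <= k < n.+1) (1 + x) ^+ (n - k) / k%:R.
Proof.
elim: n => [|n IH].
  by rewrite /bin_harmonic big_ord1 big_geq // harmonic0 !mulr0 subr0.
have tail_shift : \sum_(1 <= k < n.+1) (1 + x) ^+ (n.+1 - k) / k%:R
    = (1 + x) * \sum_(1 <= k < n.+1) (1 + x) ^+ (n - k) / k%:R.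
  rewrite mulr_sumr !big_nat; apply: eq_bigr => k /andP[_ lekn].
  by rewrite subSn // exprS mulrA.
rewrite bin_harmonicS IH harmonicS [\sum_(1 <= k < n.+2) _]big_nat_recr //=.
by rewrite subnn expr0 tail_shift exprS; ring.
Qed.

Lemma sum_bin_div_sub n x :
  \sum_(1 <= k < n.+1) \sum_(0 <= j < k)
      'C(n, j)%:R * x ^+ (n - j) / (k - j)%:R
  = (1 + x) ^+ n * harmonic F n
    - \sum_(1 <= k < n.+1) (1 + x) ^+ (n - k) / k%:R.
Proof.
rewrite sum_div_sub_harmonic -bin_harmonicE /bin_harmonic big_nat_rev big_mkord.
apply: eq_bigr => j _.
by rewrite add0n subSS subKn ?bin_sub // -ltnS.
Qed.

End BinomialHarmonic.

Lemma mulr_expr_sum_inv (F : fieldType) (a : F) n : a != 0 ->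
  a ^+ n * \sum_(1 <= k < n.+1) (a ^+ k * k%:R)^-1
  = \sum_(1 <= k < n.+1) a ^+ (n - k) / k%:R.
Proof.
move=> a_neq0; rewrite mulr_sumr !big_nat; apply: eq_bigr => k /andP[_ lekn].
by rewrite exprB ?unitfE // invfM mulrA.
Qed.

Local Open Scope complex_scope.

Theorem proposition15 (R : realType) (n : nat) (x : R[i]) :
  \sum_(1 <= k < n.+1) \sum_(0 <= j < k)
      'C(n, j)%:R * x ^+ (n - j) / (k - j)%:R
    = (1 + x) ^+ n * harmonic R[i] n
      - \sum_(1 <= k < n.+1) (1 + x) ^+ (n - k) / k%:R
  /\
  \sum_(1 <= k < n.+1) \sum_(0 <= j < k) 'C(n, j)%:R / ((k - j)%:R : R)
    = 2 ^+ n * (harmonic R n - \sum_(1 <= k < n.+1) (2 ^+ k * k%:R)^-1).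
Proof.
split; first exact: (sum_bin_div_sub _ (pchar_num R[i]) n x).
have := sum_bin_div_sub _ (pchar_num R) n 1.
under eq_bigr do under eq_bigr do rewrite expr1n mulr1.
by move=> ->; rewrite mulrBr mulr_expr_sum_inv ?pnatr_eq0.
Qed.
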